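(* Let $S,T$ be finite sets, $E\subseteq S\times T$, and for $y\in\mathbb{R}^S_+$ and $x\in\mathbb{R}^E_{+}$ define \[ \mathcal I(y;x)=\sum_{t\in T}\Big(1-\prod_{(s,t)\in E} x_{st}^{\,y(s)}\Big). \] Then for each fixed $y\ge 0$, the function $x\mapsto \mathcal I(y;x)$ is continuous submodular on the nonnegative orthant $\mathbb{R}^E_+$.
   Context: A function $g$ on a subset of $\mathbb{R}^m$ is continuous submodular if $g(x)+g(x')\ge g(x\vee x')+g(x\wedge x')$ for all $x,x'$ in its domain, where $\vee,\wedge$ are coordinatewise maximum and minimum. *)

From HB Require Import structures.
From mathcomp Require Import all_boot all_order all_algebra.
From mathcomp Require Import all_classical all_reals all_analysis.
Set Implicit Arguments. Unset Strict Implicit. Unset Printing Implicit Defensive.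
Import Order.TTheory GRing.Theory Num.Theory.
Local Open Scope ring_scope.

Definition edges (S T : finType) (E : {set S * T}) : finType :=
  {p : S * T | p \in E}.

(* I(y; x) = sum_{t in T} (1 - prod_{(s,t) in E} x_{st}^{y(s)}),
   with real powers via powR (convention 0 `^ 0 = 1). *)
Definition influence (R : realType) (S T : finType) (E : {set S * T})
  (y : S -> R) (x : edges E -> R) : R :=
  \sum_(t : T) (1 - \prod_(e : edges E | (val e).2 == t) (x e) `^ (y (val e).1)).

Definition nonneg_orthant (R : realType) (I : finType) : set (I -> R) :=
  [set x | forall i, 0 <= x i].

Definition cont_submodular (R : realType) (I : finType) (D : set (I -> R))
  (g : (I -> R) -> R) : Prop :=
  forall x x' : I -> R, D x -> D x' ->
    g (fun i => Num.max (x i) (x' i)) + g (fun i => Num.min (x i) (x' i))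
      <= g x + g x'.

From HB Require Import structures.
From mathcomp Require Import all_boot all_order all_algebra.
From mathcomp Require Import all_classical all_reals all_analysis.
From mathcomp Require Import ring lra.
Import Order.TTheory GRing.Theory Num.Theory.
Local Open Scope ring_scope.

(* Each summand of I(y; .) is 1 minus a product of the nondecreasing
   nonnegative functions x_e |-> x_e ^ y(s).  A nondecreasing map commutes
   with max and min, so it suffices that a product of nonnegative factors is
   supermodular: prod a + prod b <= prod (a v b) + prod (a ^ b). *)

Lemma homo_in_max {d d' : Order.disp_t} {T : orderType d} {T' : orderType d'}
    {D : {pred T}} {f : T -> T'} :
  {in D &, {homo f : u v / (u <= v)%O}} ->
  {in D &, {morph f : u v / Order.max u v >-> Order.max u v}}.
Proof.
move=> f_homo u v uD vD; case: (leP u v) => [uv | /ltW vu].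
- by rewrite max_r ?f_homo.
- by rewrite max_l ?f_homo.
Qed.

Lemma homo_in_min {d d' : Order.disp_t} {T : orderType d} {T' : orderType d'}
    {D : {pred T}} {f : T -> T'} :
  {in D &, {homo f : u v / (u <= v)%O}} ->
  {in D &, {morph f : u v / Order.min u v >-> Order.min u v}}.
Proof.
move=> f_homo u v uD vD; case: (leP u v) => [uv | /ltW vu].
- by rewrite min_l ?f_homo.
- by rewrite min_r ?f_homo.
Qed.

Lemma ler_mul_rearrange {R : realDomainType} (a b A B M m : R) :
  0 <= a <= b -> B <= M -> A + B <= M + m -> a * A + b * B <= b * M + a * m.
Proof.
case/andP=> a_ge0 ab BM ABMm.
have -> : b * M + a * m = a * A + b * B + ((b - a) * (M - B) + a * (M + m - A - B)).
  by ring.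
rewrite lerDl addr_ge0 ?mulr_ge0 ?subr_ge0 //; lra.
Qed.

Lemma prodr_supermodular {R : realDomainType} {I : Type} (r : seq I)
    (P : pred I) {a b : I -> R} :
  (forall i, P i -> 0 <= a i) -> (forall i, P i -> 0 <= b i) ->
  \prod_(i <- r | P i) a i + \prod_(i <- r | P i) b i <=
  \prod_(i <- r | P i) Num.max (a i) (b i) + \prod_(i <- r | P i) Num.min (a i) (b i).
Proof.
move=> a_ge0 b_ge0; elim: r => [|i r IH]; first by rewrite !big_nil.
rewrite !big_cons; case: ifP => // Pi.
have AM : \prod_(j <- r | P j) a j <= \prod_(j <- r | P j) Num.max (a j) (b j).
  by apply: ler_prod => j Pj; rewrite a_ge0 // le_max lexx.
have BM : \prod_(j <- r | P j) b j <= \prod_(j <- r | P j) Num.max (a j) (b j).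
  by apply: ler_prod => j Pj; rewrite b_ge0 // le_max lexx orbT.
have ai_ge0 := a_ge0 i Pi; have bi_ge0 := b_ge0 i Pi.
case: (leP (a i) (b i)) => [ab | /ltW ba].
- by rewrite ler_mul_rearrange ?ai_ge0.
- by rewrite addrC ler_mul_rearrange ?bi_ge0 // addrC.
Qed.

Theorem corollary1 (R : realType) (S T : finType) (E : {set S * T})
  (y : S -> R) (hy : forall s, 0 <= y s) :
  cont_submodular (@nonneg_orthant R (edges E)) (@influence R S T E y).
Proof.
move=> x x' x_ge0 x'_ge0; rewrite /influence -!big_split /=.
apply: ler_sum => t _.
(* [sval], not [val]: this is how [influence] elaborates, and lra matches
   atoms syntactically. *)
have powR_homo (e : edges E) := ge0_ler_powR (hy (sval e).1).
rewrite (eq_bigr _ (fun e _ => homo_in_max (powR_homo e) _ _ (x_ge0 e) (x'_ge0 e))).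
rewrite (eq_bigr _ (fun e _ => homo_in_min (powR_homo e) _ _ (x_ge0 e) (x'_ge0 e))).
have := prodr_supermodular (index_enum (edges E)) (fun e => (sval e).2 == t)
  (fun e _ => powR_ge0 (x e) (y (sval e).1)) (fun e _ => powR_ge0 (x' e) (y (sval e).1)).
lra.
Qed.
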